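(* If $\lambda>0$, $0<x<\pi$ and $x\lambda<\pi/2$, then \[ \int_0^{x}\frac{\sin \lambda y}{\sin y}\,dy>\mathrm{Si}(\lambda\sin x), \] where $\mathrm{Si}(t)=\int_0^t\frac{\sin u}{u}\,du$. *)

From Stdlib Require Import Reals.
From Coquelicot Require Import Coquelicot.
Open Scope R_scope.

Definition sinc (u : R) : R := if Req_EM_T u 0 then 1 else sin u / u.

Definition Si (t : R) : R := RInt sinc 0 t.

(* Integrand sin(lambda y) / sin y, extended continuously by lambda at y = 0
   (the value at a single point does not affect the Riemann integral). *)
Definition sin_ratio (lam y : R) : R :=
  if Req_EM_T y 0 then lam else sin (lam * y) / sin y.

(* Substituting u = lam sin y gives
   Si(lam sin x) = int_0^x lam cos y sinc(lam sin y) dy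
                 = int_0^x cos y sin(lam sin y) / sin y dy.
   For 0 < y < x we have 0 < lam sin y <= lam y < pi/2, hence
   0 < sin(lam sin y) <= sin(lam y), and cos y < 1 makes the comparison of
   the integrands with sin(lam y) / sin y strict. No case split at
   x = pi/2 is needed: beyond it, cos y < 0 only helps. *)

From Stdlib Require Import Reals Lra.
From Coquelicot Require Import Coquelicot.
Open Scope R_scope.

Lemma continuous_sinc_0 : continuous sinc 0.
Proof.
  intros P HP.
  assert (Hsinc0 : sinc 0 = 1)
    by (unfold sinc; destruct (Req_EM_T 0 0); [reflexivity | contradiction]).
  rewrite Hsinc0 in HP.
  assert (Hlim : locally 0 (fun y => y <> 0 -> P (sin y / y)))
    by exact (is_lim_sinc_0 P HP).
  unfold filtermap; revert Hlim; apply filter_imp; intros y Hy.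
  unfold sinc; destruct (Req_EM_T y 0) as [->|Hy0].
  - apply locally_singleton, HP.
  - exact (Hy Hy0).
Qed.

Lemma continuous_sinc u : continuous sinc u.
Proof.
  destruct (Req_EM_T u 0) as [->|Hu]; [exact continuous_sinc_0|].
  apply continuous_ext_loc with (fun y => sin y * / y).
  - generalize (open_neq 0 u Hu); apply filter_imp; intros y Hy.
    unfold sinc; destruct (Req_EM_T y 0); [contradiction | reflexivity].
  - apply (continuous_mult sin (fun y => / y)).
    + apply continuous_sin.
    + now apply continuous_Rinv.
Qed.

Lemma sinc_pos u : Rabs u < PI -> 0 < sinc u.
Proof.
  intros Hu; apply Rabs_def2 in Hu.
  unfold sinc; destruct (Req_EM_T u 0) as [|Hu0]; [lra|].
  destruct (Rlt_le_dec 0 u).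
  - apply Rdiv_lt_0_compat; [apply sin_gt_0|]; lra.
  - assert (sin u < 0) by (apply sin_lt_0_var; lra).
    replace (sin u / u) with (- sin u / - u) by (field; lra).
    apply Rdiv_lt_0_compat; lra.
Qed.

Lemma sin_ratio_sinc lam y : Rabs y < PI ->
  sin_ratio lam y = lam * sinc (lam * y) / sinc y.
Proof.
  intros Hy.
  assert (Hsinc := sinc_pos y Hy).
  unfold sin_ratio.
  destruct (Req_EM_T y 0) as [->|Hy0].
  - rewrite Rmult_0_r; unfold sinc.
    destruct (Req_EM_T 0 0); [field | contradiction].
  - unfold sinc in Hsinc |- *.
    destruct (Req_EM_T y 0); [contradiction|].
    assert (sin y <> 0) by (intro Hs; rewrite Hs in Hsinc; lra).
    destruct (Req_EM_T (lam * y) 0) as [Hly|Hly].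
    + destruct (Rmult_integral _ _ Hly) as [->|]; [|contradiction].
      rewrite Rmult_0_l, sin_0; field; auto.
    + field; repeat split; auto.
      intro; apply Hly; subst; ring.
Qed.

Lemma continuous_sin_ratio lam y : Rabs y < PI -> continuous (sin_ratio lam) y.
Proof.
  intros Hy.
  apply continuous_ext_loc with (fun y => lam * sinc (lam * y) * / sinc y).
  - assert (Hopen : open (fun y => y < PI /\ - PI < y))
      by (apply open_and; [apply open_lt | apply open_gt]).
    generalize (Hopen y (Rabs_def2 _ _ Hy)); apply filter_imp.
    intros z Hz; symmetry; apply sin_ratio_sinc, Rabs_def1; tauto.
  - apply (continuous_mult (fun y => lam * sinc (lam * y)) (fun y => / sinc y)).
    + apply (continuous_mult (fun _ => lam) (fun y => sinc (lam * y))).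
      * apply continuous_const.
      * apply (continuous_comp (fun y => lam * y) sinc), continuous_sinc.
        apply (continuous_mult (fun _ => lam) (fun y => y)).
        -- apply continuous_const.
        -- apply continuous_id.
    + apply continuous_Rinv_comp; [apply continuous_sinc|].
      apply Rgt_not_eq, sinc_pos, Hy.
Qed.

Lemma Si_lam_sin lam x :
  Si (lam * sin x) = RInt (fun y => lam * cos y * sinc (lam * sin y)) 0 x.
Proof.
  unfold Si.
  replace 0 with (lam * sin 0) at 1 by (rewrite sin_0; ring).
  rewrite <- (RInt_comp sinc (fun y => lam * sin y) (fun y => lam * cos y)).
  - reflexivity.
  - intros; apply continuous_sinc.
  - intros y _; split.
    + auto_derive; [exact I | ring].
    + apply (continuous_mult (fun _ => lam) cos).
      * apply continuous_const.
      * apply continuous_cos.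
Qed.

Lemma continuous_lam_sin_integrand lam y :
  continuous (fun y => lam * cos y * sinc (lam * sin y)) y.
Proof.
  apply (continuous_mult (fun y => lam * cos y) (fun y => sinc (lam * sin y))).
  - apply (continuous_mult (fun _ => lam) cos).
    + apply continuous_const.
    + apply continuous_cos.
  - apply (continuous_comp (fun y => lam * sin y) sinc), continuous_sinc.
    apply (continuous_mult (fun _ => lam) sin).
    + apply continuous_const.
    + apply continuous_sin.
Qed.

Lemma lam_sin_integrand_lt_sin_ratio lam y :
  0 < lam -> 0 < y < PI -> y * lam < PI / 2 ->
  lam * cos y * sinc (lam * sin y) < sin_ratio lam y.
Proof.
  intros Hlam Hy Hylam.
  assert (Hsin : 0 < sin y) by (apply sin_gt_0; lra).
  assert (Hsin_y : sin y < y) by (apply sin_lt_x; lra).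
  assert (Hcos : cos y < 1).
  { assert (E := sin2_cos2 y); unfold Rsqr in E; nra. }
  assert (Hls : 0 < lam * sin y) by nra.
  assert (Hls_ly : lam * sin y <= lam * y) by nra.
  assert (Hsin_ls : 0 < sin (lam * sin y)) by (apply sin_gt_0; lra).
  assert (Hsin_mono : sin (lam * sin y) <= sin (lam * y))
    by (apply sin_incr_1; lra).
  unfold sinc, sin_ratio.
  destruct (Req_EM_T (lam * sin y) 0); [lra|].
  destruct (Req_EM_T y 0); [lra|].
  replace (lam * cos y * (sin (lam * sin y) / (lam * sin y)))
    with (cos y * sin (lam * sin y) / sin y) by (field; lra).
  apply Rmult_lt_compat_r; [apply Rinv_0_lt_compat; lra | nra].
Qed.

Theorem proposition9 (lam x : R) :
  0 < lam -> 0 < x -> x < PI -> x * lam < PI / 2 ->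
  RInt (sin_ratio lam) 0 x > Si (lam * sin x).
Proof.
  intros Hlam Hx HxPI Hxlam.
  rewrite Si_lam_sin.
  apply RInt_lt; [exact Hx | | |].
  - intros y Hy; apply continuous_sin_ratio, Rabs_def1; lra.
  - intros y _; apply continuous_lam_sin_integrand.
  - intros y Hy; apply lam_sin_integrand_lt_sin_ratio; [lra | lra | nra].
Qed.
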